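(* If $G$ is a tree, then $\mathcal{P}(G)=\mathcal{T}(G)$.
   Context: A tree is a connected graph with no cycle. A co-2-plex is a vertex set inducing a subgraph of maximum degree at most 1. $\mathcal{P}(G)=\mathrm{conv}\{\chi^S : S\text{ co-2-plex of } G\}\subseteq\mathbb{R}^V$. $\mathcal{T}(G)$ is the polytope of $x\in\mathbb{R}^V$ satisfying $0\le x\le 1$ and $x(W)+(|W|-1)x_w\le|W|$ for all $w\in V$ and $W\subseteq N(w)$, where $x(A)=\sum_{a\in A}x_a$. *)

From HB Require Import structures.
From mathcomp Require Import all_boot all_order all_algebra.
Set Implicit Arguments. Unset Strict Implicit. Unset Printing Implicit Defensive.
Import Order.TTheory GRing.Theory Num.Theory.
Local Open Scope ring_scope.

Definition simple_graph (V : finType) (e : rel V) : Prop :=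
  symmetric e /\ irreflexive e.

Definition connected_graph (V : finType) (e : rel V) : Prop :=
  forall u v : V, connect e u v.

Definition acyclic_graph (V : finType) (e : rel V) : Prop :=
  forall p : seq V, (3 <= size p)%N -> ~~ ucycleb e p.

Definition is_tree (V : finType) (e : rel V) : Prop :=
  simple_graph e /\ (0 < #|V|)%N /\ connected_graph e /\ acyclic_graph e.

Definition nbhd (V : finType) (e : rel V) (w : V) : {set V} := [set u | e w u].

Definition co2plex (V : finType) (e : rel V) (S : {set V}) : bool :=
  [forall v in S, #|S :&: nbhd e v| <= 1]%N.

Definition chi (R : numDomainType) (V : finType) (S : {set V}) : V -> R :=
  fun v => if v \in S then 1 else 0.

(* x in P(G) = conv{chi^S : S co-2-plex} *)
Definition in_P (R : realFieldType) (V : finType) (e : rel V) (x : V -> R) : Prop :=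
  exists lam : {set V} -> R,
    [/\ forall S, 0 <= lam S,
        forall S, ~~ co2plex e S -> lam S = 0,
        \sum_(S : {set V}) lam S = 1
      & forall v, x v = \sum_(S : {set V}) lam S * chi R S v].

Definition in_T (R : realFieldType) (V : finType) (e : rel V) (x : V -> R) : Prop :=
  (forall v, 0 <= x v <= 1) /\
  (forall (w : V) (W : {set V}), W \subset nbhd e w ->
     \sum_(a in W) x a + (#|W|%:R - 1) * x w <= #|W|%:R).

(* Every co-2-plex satisfies the inequalities of T(G), hence so does every convex
   combination of co-2-plexes.  Conversely, let x be in T(G) and grow the tree one
   leaf at a time, maintaining a probability distribution on the co-2-plexes of the
   current subtree whose vertex marginals are x and whose edge marginals are the
   Frechet lower bounds max(0, x_u + x_v - 1).  To attach a leaf l to p, add l to a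
   sampled set S with probability al if p is an isolated member of S, with
   probability be if p is not in S, and never otherwise.  The inequality of T(G)
   at p, for W the neighbours of p in the subtree together with l, shows that the
   isolated mass is at least max(0, x_l + x_p - 1); so suitable al, be in [0,1]
   exist, and they restore the invariant. *)

From mathcomp Require Import all_boot all_order all_algebra.
From mathcomp Require Import reals.
From mathcomp Require Import ring lra zify.
Set Implicit Arguments. Unset Strict Implicit. Unset Printing Implicit Defensive.
Import Order.TTheory GRing.Theory Num.Theory.

Section TreeGrowth.
Variables (V : finType) (e : rel V).

Definition induced (U : {set V}) : rel V :=
  [rel a b | [&& a \in U, b \in U & e a b]].

Definition induced_connected (U : {set V}) : Prop :=
  forall a b, a \in U -> b \in U -> connect (induced U) a b.

Lemma connected_exit_edge (U : {set V}) u v :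
  connected_graph e -> u \in U -> v \notin U ->
  exists l p, [/\ l \notin U, p \in U & e p l].
Proof.
move=> conn uU vU; have /connectP[s ps vE] := conn u v.
elim: s u uU ps vE => [|y s IH] u uU /=; first by move=> _ vE; rewrite vE uU in vU.
case/andP=> euy ys vE; have [yU|yU] := boolP (y \in U); first exact: IH ys vE.
by exists y, u.
Qed.

Lemma induced_path_sub (U : {set V}) a s : path (induced U) a s -> {subset s <= U}.
Proof.
elim: s a => [|y s IH] a //= /andP[/and3P[_ yU _] ys] z.
by rewrite inE => /predU1P[->|/(IH _ ys)].
Qed.

Hypotheses (sym : symmetric e) (irr : irreflexive e) (acy : acyclic_graph e).

(* Two neighbours of [l] in a connected [U] not containing [l] would close a cycle through [l]. *)
Lemma outside_neighbour_unique (U : {set V}) l a b :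
  induced_connected U -> l \notin U -> a \in U -> b \in U -> e l a -> e l b -> a = b.
Proof.
move=> cU lU aU bU ela elb; apply/eqP/negPn/negP => nab.
have /connectP[s ps bE] := cU a b aU bU.
rewrite {}bE in nab elb; move: nab elb.
case: (shortenP ps) => s' ps' us' _ nab elb.
have s'U := induced_path_sub ps'.
have ls' : l \notin s' by apply/negP => /s'U; rewrite (negbTE lU).
have la : l != a by apply: contraNneq lU => ->.
move: us' => /= /andP[as' us'].
have := @acy (l :: a :: s'); rewrite /ucycleb /= ela.
rewrite inE negb_or la ls' as' us' rcons_path (sub_path _ ps'); last first.
  by move=> y z /and3P[].
rewrite sym elb /=.
by case: s' {ps' s'U ls' as' us' elb} nab => [|y s'] /=; [rewrite eqxx | move=> _ /(_ isT)].
Qed.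

Lemma induced_connectedU1 (U : {set V}) l p :
  induced_connected U -> p \in U -> e p l -> induced_connected (l |: U).
Proof.
move=> cU pU epl.
have sub a b : connect (induced U) a b -> connect (induced (l |: U)) a b.
  apply: connect_sub => {}a {}b /and3P[aU bU eab]; apply: connect1.
  by rewrite /induced /= !inE aU bU eab !orbT.
have lp : connect (induced (l |: U)) l p.
  by apply: connect1; rewrite /induced /= !inE eqxx pU sym epl orbT.
have pl : connect (induced (l |: U)) p l.
  by apply: connect1; rewrite /induced /= !inE eqxx pU epl orbT.
move=> a b; rewrite !inE => /predU1P[->|aU] /predU1P[->|bU] //.
- exact: connect_trans lp (sub _ _ (cU _ _ pU bU)).
- exact: connect_trans (sub _ _ (cU _ _ aU pU)) pl.
- exact: sub (cU _ _ aU bU).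
Qed.

End TreeGrowth.

Section Co2plex.
Variables (V : finType) (e : rel V).

Lemma co2plexP (S : {set V}) :
  reflect (forall v a b, v \in S -> a \in S -> b \in S -> e v a -> e v b -> a = b)
          (co2plex e S).
Proof.
apply: (iffP forall_inP) => [H v a b vS aS bS eva evb | H v vS].
  by apply: (card_le1_eqP (H v vS)); rewrite !inE ?aS ?bS.
apply/card_le1_eqP => a b; rewrite !inE => /andP[aS eva] /andP[bS evb].
exact: (H v b a).
Qed.

Hypotheses (sym : symmetric e) (irr : irreflexive e).

Lemma co2plexU1 (S : {set V}) l : co2plex e S ->
  (forall a b, a \in S -> b \in S -> e l a -> e l b -> a = b) ->
  (forall u w, u \in S -> w \in S -> e l u -> ~~ e u w) ->
  co2plex e (l |: S).
Proof.
move=> /co2plexP coS nb iso; apply/co2plexP => v a b.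
have lonely u w : u \in S -> w \in S -> e u w -> e u l -> False.
  by move=> uS wS euw eul; move: (iso u w uS wS); rewrite sym eul euw => /(_ isT).
move=> /setU1P[->|vS] /setU1P[->|aS] /setU1P[->|bS] eva evb //;
  rewrite ?irr in eva evb => //.
- exact: nb.
- by case: (lonely v b vS bS evb eva).
- by case: (lonely v a vS aS eva evb).
- exact: coS vS aS bS eva evb.
Qed.

End Co2plex.

Local Open Scope ring_scope.

Section Realization.
Variables (R : realFieldType) (V : finType) (e : rel V) (x : V -> R).

Lemma chi_setU1 (S : {set V}) l v : v != l -> chi R (l |: S) v = chi R S v.
Proof. by move=> vl; rewrite /chi !inE (negbTE vl). Qed.

Lemma sum_chi (W S : {set V}) : \sum_(a in W) chi R S a = #|W :&: S|%:R.
Proof.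
rewrite -sum1_card natr_sum (bigID (mem S)) /= [X in _ + X]big1; last first.
  by move=> a /andP[_ /negbTE aS]; rewrite /chi aS.
rewrite addr0; apply: eq_big => [a|a /andP[_ aS]]; first by rewrite !inE.
by rewrite /chi aS.
Qed.

Lemma sum_subsets_setU1 (l : V) (F : {set V} -> R) :
  \sum_(S : {set V}) F S = \sum_(S : {set V} | l \notin S) (F S + F (l |: S)).
Proof.
rewrite (bigID (fun S : {set V} => l \in S)) /= addrC big_split /=; congr (_ + _).
rewrite (reindex_onto (fun S => l |: S) (fun S => S :\ l)) /=; last first.
  by move=> S lS; rewrite setD1K.
apply: eq_bigl => S; rewrite setU11 /=.
have [lS|lS] := boolP (l \in S); last by rewrite setU1K // eqxx.
by apply/negbTE/eqP => E; move: lS; rewrite -E !inE eqxx.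
Qed.

Lemma exists_scale (c a : R) : 0 <= c <= a -> exists2 t : R, 0 <= t <= 1 & t * a = c.
Proof.
case/andP=> c0 ca; have [a0|anz] := eqVneq a 0.
  by exists 0; rewrite ?lexx ?ler01 // mul0r; apply/eqP; rewrite eq_le c0 -a0 ca.
exists (c / a); last by rewrite divfK.
have a_gt0 : 0 < a by rewrite lt_def anz (le_trans c0 ca).
by rewrite divr_ge0 ?(ltW a_gt0) //= ler_pdivrMr // mul1r.
Qed.

Lemma in_P_in_T : in_P e x -> in_T e x.
Proof.
move=> [lam [lam0 lamco lam1 lamx]]; split.
  move=> v; rewrite lamx -lam1; apply/andP; split.
    by apply: sumr_ge0 => S _; apply: mulr_ge0; rewrite /chi ?lam0 //; case: (v \in S).
  by apply: ler_sum => S _; apply: ler_piMr; rewrite /chi ?lam0 //; case: (v \in S).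
move=> w W Wsub.
rewrite (eq_bigr _ (fun a _ => lamx a)) lamx exchange_big /= mulr_sumr -big_split /=.
have lamW : \sum_(S : {set V}) lam S * #|W|%:R = #|W|%:R :> R.
  by rewrite -mulr_suml lam1 mul1r.
rewrite -[X in _ <= X]lamW; apply: ler_sum => S _.
rewrite -mulr_sumr mulrCA -mulrDr.
have [->|nz] := eqVneq (lam S) 0; first by rewrite !mul0r.
have coS : co2plex e S by apply: contraNT nz => /lamco ->.
rewrite ler_wpM2l // sum_chi.
have WS : (#|W :&: S| <= #|W|)%N by apply/subset_leq_card/subsetIl.
rewrite /chi; case: ifP => wS; last by move: WS; rewrite -(ler_nat R); lra.
have WS1 : (#|W :&: S| <= 1)%N.
  apply: leq_trans (forall_inP coS w wS); apply/subset_leq_card.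
  by rewrite setIC setIS.
by move: WS1; rewrite -(ler_nat R); lra.
Qed.

(* The Frechet lower bound: the least possible probability that both [u] and [v]
   lie in a random set with marginals [x u] and [x v]. *)
Definition frechet u v := Num.max 0 (x u + x v - 1).

Lemma frechetC u v : frechet u v = frechet v u.
Proof. by rewrite /frechet (addrC (x u)). Qed.

Lemma frechet_ge0 u v : 0 <= frechet u v.
Proof. by rewrite /frechet le_max lexx. Qed.

Lemma le_frechet u v : x u + x v - 1 <= frechet u v.
Proof. by rewrite /frechet le_max lexx orbT. Qed.

Lemma frechet_le u v : 0 <= x u -> x v <= 1 -> frechet u v <= x u.
Proof. by move=> xu0 xv1; rewrite /frechet ge_max xu0 /=; lra. Qed.

Lemma sum_frechet_le (p : V) (Z : {set V}) : in_T e x -> Z \subset nbhd e p ->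
  \sum_(u in Z) frechet p u <= x p.
Proof.
move=> [_ xT] Zp; set Z' := [set u in Z | 0 < x p + x u - 1].
have -> : \sum_(u in Z) frechet p u = \sum_(u in Z') (x u + (x p - 1)).
  rewrite (bigID (fun u => 0 < x p + x u - 1)) /= [X in _ + X]big1; last first.
    by move=> u /andP[_ nu]; apply/max_idPl; rewrite leNgt.
  rewrite addr0; apply: eq_big => [u|u /andP[_ pu]]; first by rewrite !inE.
  by rewrite /frechet (max_idPr (ltW pu)) addrCA addrA.
have Z'p : Z' \subset nbhd e p.
  by apply: subset_trans Zp; apply/subsetP => u; rewrite inE => /andP[].
have := xT p Z' Z'p; rewrite big_split /= sumr_const -mulr_natr.
set s := \sum_(a in Z') x a; set n := #|Z'|%:R; nra.
Qed.

Record realizes (U : {set V}) (lam : {set V} -> R) : Prop := Realizes {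
  realizes_ge0 : forall S : {set V}, 0 <= lam S;
  realizes_co2plex : forall S : {set V}, ~~ co2plex e S -> lam S = 0;
  realizes_sub : forall S : {set V}, ~~ (S \subset U) -> lam S = 0;
  realizes_sum1 : \sum_(S : {set V}) lam S = 1;
  realizes_vertex : forall v, v \in U -> \sum_(S : {set V}) lam S * chi R S v = x v;
  realizes_edge : forall u v, u \in U -> v \in U -> e u v ->
    \sum_(S : {set V}) lam S * (chi R S u * chi R S v) = frechet u v }.

Lemma realizes_set0 : realizes set0 (fun S => (S == set0)%:R).
Proof.
split=> [S|S|S||v|u v]; rewrite ?in_set0 //.
- by case: eqP => // -> /negP[]; apply/forall_inP => v; rewrite in_set0.
- by case: eqP => // ->; rewrite sub0set.
- by rewrite (bigD1 set0) //= eqxx big1 ?addr0 // => S /negbTE ->.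
Qed.

Lemma realizes_neq0 U lam S : realizes U lam -> lam S != 0 -> (S \subset U) && co2plex e S.
Proof.
move=> lamU nz; apply/andP; split; apply: contraNT nz.
  by move=> /(realizes_sub lamU) ->.
by move=> /(realizes_co2plex lamU) ->.
Qed.

Lemma realizes_setT_in_P lam : realizes setT lam -> in_P e x.
Proof.
case=> lam0 lamco _ lam1 lamx _; exists lam; split=> // v.
by rewrite lamx ?inE.
Qed.

Lemma realizes_absent_mass U lam p : realizes U lam -> p \in U ->
  \sum_(S : {set V}) lam S * (p \notin S)%:R = 1 - x p.
Proof.
move=> lamU pU.
transitivity (\sum_(S : {set V}) (lam S - lam S * chi R S p)).
  by apply: eq_bigr => S _; rewrite /chi; case: (p \in S); rewrite ?mulr1 ?mulr0 ?subr0 ?subrr.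
by rewrite sumrB (realizes_sum1 lamU) (realizes_vertex lamU pU).
Qed.

Definition isolated (p : V) (S : {set V}) : bool := (p \in S) && (S :&: nbhd e p == set0).

(* In a co-2-plex, a member [p] has either no neighbour or exactly one. *)
Lemma chi_co2plex_split (U S : {set V}) p : co2plex e S -> S \subset U ->
  chi R S p = (isolated p S)%:R + \sum_(u in nbhd e p :&: U) chi R S p * chi R S u.
Proof.
move=> coS SU; rewrite /isolated; have [pS|pS] /= := boolP (p \in S); last first.
  by rewrite /chi (negbTE pS) add0r big1 // => u _; rewrite mul0r.
have chip : chi R S p = 1 by rewrite /chi pS.
rewrite chip (eq_bigr (chi R S)) => [|u _]; last by rewrite mul1r.
rewrite sum_chi -setIA (setIC U) (setIidPl SU) setIC.
have := forall_inP coS p pS; rewrite setIC.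
case: eqP => [->|/eqP]; first by rewrite cards0 addr0.
by rewrite -card_gt0 add0r => ? ?; rewrite (_ : #|_| = 1%N) //; lia.
Qed.

Lemma realizes_isolated_mass U lam p : realizes U lam -> p \in U ->
  \sum_(S : {set V}) lam S * (isolated p S)%:R + \sum_(u in nbhd e p :&: U) frechet p u = x p.
Proof.
move=> lamU pU; rewrite -(realizes_vertex lamU pU).
rewrite (eq_bigr (fun u => \sum_(S : {set V}) lam S * (chi R S p * chi R S u))); last first.
  by move=> u; rewrite !inE => /andP[epu uU]; rewrite (realizes_edge lamU pU uU epu).
rewrite exchange_big -big_split /=; apply: eq_bigr => S _.
have [->|nz] := eqVneq (lam S) 0.
  by rewrite !mul0r big1 ?add0r // => u _; rewrite mul0r.
have /andP[SU coS] := realizes_neq0 lamU nz.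
by rewrite -mulr_sumr -mulrDr -chi_co2plex_split.
Qed.

(* [insert_vertex lam f l] samples [S] from [lam] and then adds [l] to [S] with
   probability [f S]. *)
Definition insert_vertex (lam f : {set V} -> R) (l : V) (S : {set V}) : R :=
  if l \in S then f (S :\ l) * lam (S :\ l) else (1 - f S) * lam S.

Lemma sum_insert_vertex (lam f g : {set V} -> R) (l : V) :
  (forall S : {set V}, l \in S -> lam S = 0) ->
  (forall S : {set V}, l \notin S -> g (l |: S) = g S) ->
  \sum_(S : {set V}) insert_vertex lam f l S * g S = \sum_(S : {set V}) lam S * g S.
Proof.
move=> lam_l gl; rewrite (sum_subsets_setU1 l) [RHS](sum_subsets_setU1 l).
apply: eq_bigr => S lS; rewrite /insert_vertex setU11 setU1K // (negbTE lS) gl //.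
by rewrite (lam_l _ (setU11 _ _)) mul0r addr0 -!mulrDl subrK mul1r.
Qed.

Lemma sum_insert_vertex_chi (lam f h : {set V} -> R) (l : V) :
  (forall S : {set V}, l \in S -> lam S = 0) ->
  \sum_(S : {set V}) insert_vertex lam f l S * (chi R S l * h S) =
  \sum_(S : {set V}) f S * lam S * h (l |: S).
Proof.
move=> lam_l; rewrite (sum_subsets_setU1 l) [RHS](sum_subsets_setU1 l).
apply: eq_bigr => S lS; rewrite /insert_vertex /chi setU11 setU1K // (negbTE lS).
by rewrite (lam_l _ (setU11 _ _)) mulr0 !mul0r mulr0 add0r addr0 mul1r.
Qed.

Section Insertion.
Hypotheses (sym : symmetric e) (irr : irreflexive e).

Lemma realizes_insert (U : {set V}) (lam f : {set V} -> R) (l : V) :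
  realizes U lam -> l \notin U ->
  (forall S, 0 <= f S <= 1) ->
  (forall T : {set V}, T \subset U -> co2plex e T -> f T != 0 -> co2plex e (l |: T)) ->
  \sum_(S : {set V}) f S * lam S = x l ->
  (forall u, u \in U -> e l u -> \sum_(S : {set V}) f S * lam S * chi R S u = frechet l u) ->
  realizes (l |: U) (insert_vertex lam f l).
Proof.
move=> lamU lU f01 fco fx fe; have [lam0 lamco lamsub lam1 lamx lame] := lamU.
have lam_l (S : {set V}) : l \in S -> lam S = 0.
  by move=> lS; apply: lamsub; apply: contraNN lU => /subsetP; apply.
have chiU v (S : {set V}) : v \in U -> chi R (l |: S) v = chi R S v.
  by move=> vU; apply: chi_setU1; apply: contraNneq lU => <-.
have edge_l v : v \in U -> e l v ->
    \sum_(S : {set V}) insert_vertex lam f l S * (chi R S l * chi R S v) = frechet l v.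
  move=> vU elv; rewrite (sum_insert_vertex_chi f _ lam_l) -(fe v vU elv).
  by apply: eq_bigr => S _; rewrite chiU.
split.
- move=> S; rewrite /insert_vertex; case: ifP => _; apply: mulr_ge0 => //.
    by case/andP: (f01 (S :\ l)).
  by rewrite subr_ge0; case/andP: (f01 S).
- move=> S coS; rewrite /insert_vertex; case: ifP => lS; last by rewrite lamco ?mulr0.
  have [->|fnz] := eqVneq (f (S :\ l)) 0; first by rewrite mul0r.
  have [->|/(realizes_neq0 lamU)/andP[SU coSl]] := eqVneq (lam (S :\ l)) 0.
    by rewrite mulr0.
  by move: coS; rewrite -(setD1K lS) fco.
- move=> S SU; rewrite /insert_vertex; case: ifP => lS.
    rewrite -(setD1K lS) in SU.
    by rewrite lamsub ?mulr0 //; apply: contra SU; apply: setUS.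
  by rewrite lamsub ?mulr0 //; apply: contra SU => /subset_trans; apply; apply: subsetUr.
- transitivity (\sum_(S : {set V}) insert_vertex lam f l S * 1).
    by apply: eq_bigr => S _; rewrite mulr1.
  by rewrite (sum_insert_vertex f lam_l) //; under eq_bigr do rewrite mulr1.
- move=> v /setU1P[->|vU].
    transitivity (\sum_(S : {set V}) insert_vertex lam f l S * (chi R S l * 1)).
      by apply: eq_bigr => S _; rewrite mulr1.
    by rewrite (sum_insert_vertex_chi f _ lam_l) -fx; apply: eq_bigr => S _; rewrite mulr1.
  by rewrite -(lamx v vU) (sum_insert_vertex f lam_l) // => S _; apply: chiU.
- move=> u v /setU1P[->|uU] /setU1P[->|vU] euv.
  + by rewrite irr in euv.
  + exact: edge_l.
  + rewrite frechetC -(edge_l u uU); last by rewrite sym.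
    by apply: eq_bigr => S _; rewrite [chi R S u * _]mulrC.
  + by rewrite -(lame u v uU vU euv) (sum_insert_vertex f lam_l) // => S _; rewrite !chiU.
Qed.

Lemma realizes_insert_isolated (U : {set V}) lam l :
  0 <= x l <= 1 -> realizes U lam -> l \notin U -> (forall u, u \in U -> ~~ e l u) ->
  realizes (l |: U) (insert_vertex lam (fun=> x l) l).
Proof.
move=> xl01 lamU lU nb; apply: realizes_insert => //.
- move=> T TU coT _; apply: co2plexU1 => // [a b aT _ ela | u w uT _ elu].
    by move: (nb a (subsetP TU a aT)); rewrite ela.
  by move: (nb u (subsetP TU u uT)); rewrite elu.
- by rewrite -mulr_sumr (realizes_sum1 lamU) mulr1.
- by move=> u uU elu; move: (nb u uU); rewrite elu.
Qed.

Lemma realizes_insert_leaf (U : {set V}) lam l p :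
  in_T e x -> realizes U lam -> l \notin U -> p \in U -> e l p ->
  (forall u, u \in U -> e l u -> u = p) ->
  exists lam', realizes (l |: U) lam'.
Proof.
move=> xT lamU lU pU elp nb; have [x01 _] := xT.
have /andP[xl0 xl1] := x01 l; have /andP[xp0 xp1] := x01 p.
set mI := \sum_(S : {set V}) lam S * (isolated p S)%:R.
have frechet_mI : frechet l p <= mI.
  have lN : l \notin nbhd e p :&: U by rewrite inE negb_and lU orbT.
  have := @sum_frechet_le p (l |: (nbhd e p :&: U)) xT.
  rewrite big_setU1 //= -(realizes_isolated_mass lamU pU) frechetC -/mI.
  by rewrite lerD2r; apply; rewrite subUset sub1set inE sym elp subsetIl.
have [al al01 alE] : exists2 al : R, 0 <= al <= 1 & al * mI = frechet l p.
  by apply: exists_scale; rewrite frechet_ge0.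
have [be be01 beE] : exists2 be : R, 0 <= be <= 1 & be * (1 - x p) = x l - frechet l p.
  apply: exists_scale; have := le_frechet l p; have := frechet_le xl0 xp1.
  by rewrite subr_ge0 => -> /=; lra.
exists (insert_vertex lam (fun S => al * (isolated p S)%:R + be * (p \notin S)%:R) l).
apply: realizes_insert => //.
- move=> S; rewrite /isolated; case: (p \in S); case: (_ == set0);
    by rewrite /= ?mulr1 ?mulr0 ?addr0 ?add0r ?lexx ?ler01.
- move=> T TU coT fT; apply: co2plexU1 => // [a b aT bT ela elb | u w uT wT elu].
    by rewrite (nb a (subsetP TU a aT) ela) (nb b (subsetP TU b bT) elb).
  have up := nb u (subsetP TU u uT) elu; subst u.
  move: fT; rewrite /isolated uT /=.
  have [Tp _ | _] := eqVneq (T :&: nbhd e p) set0; last first.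
    by rewrite -[false%:R]/(0 : R) !mulr0 addr0 eqxx.
  by apply/negP => epw; have := in_set0 w; rewrite -Tp !inE wT epw.
- rewrite -(subrK (frechet l p) (x l)) -beE -alE -(realizes_absent_mass lamU pU).
  by rewrite !mulr_sumr -big_split /=; apply: eq_bigr => S _; ring.
- move=> u uU elu; rewrite (nb u uU elu) -alE mulr_sumr.
  apply: eq_bigr => S _; rewrite /isolated /chi.
  by case: (p \in S) => /=; ring.
Qed.

End Insertion.

Lemma exists_realized_subtree n : is_tree e -> in_T e x -> (n <= #|V|)%N ->
  exists (U : {set V}) (lam : {set V} -> R),
    [/\ #|U| = n, induced_connected e U & realizes U lam].
Proof.
move=> [[sym irr] [_ [conn acy]]] xT; elim: n => [_|n IH n_lt].
  exists set0, (fun S => (S == set0)%:R); split; last exact: realizes_set0.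
  - exact: cards0.
  - by move=> a b; rewrite in_set0.
have [U [lam [cardU connU lamU]]] := IH (ltnW n_lt).
have [v vU] : exists v, v \notin U.
  apply/existsP; rewrite -negb_forall; apply: contraTN n_lt => /forallP allU.
  by rewrite -cardU -leqNgt subset_leq_card //; apply/subsetP => v _; apply: allU.
have [U0|/set0Pn[u uU]] := eqVneq U set0.
  subst U.
  exists [set v], (insert_vertex lam (fun=> x v) v); split.
  - by rewrite cards1 -cardU cards0.
  - by move=> a b; rewrite !inE => /eqP-> /eqP->.
  - rewrite -[[set v]]setU0; apply: realizes_insert_isolated => //; first exact: xT.1.
    by move=> ?; rewrite in_set0.
have [l [p [lU pU epl]]] := connected_exit_edge conn uU vU.
have nb w : w \in U -> e l w -> w = p.
  by move=> wU elw; apply: (outside_neighbour_unique sym acy connU lU wU pU elw); rewrite sym.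
have elp : e l p by rewrite sym.
have [lam' lam'U] := realizes_insert_leaf sym irr xT lamU lU pU elp nb.
exists (l |: U), lam'; split=> //; first by rewrite cardsU1 lU cardU.
exact: (induced_connectedU1 sym connU pU epl).
Qed.

End Realization.

Theorem mainTheorem10 (R : realType) (V : finType) (e : rel V) :
  is_tree e -> forall x : V -> R, in_P e x <-> in_T e x.
Proof.
move=> tree x; split; first exact: in_P_in_T.
move=> xT; have [U [lam [cardU _ lamU]]] := exists_realized_subtree tree xT (leqnn #|V|).
have UT : U = setT by apply/eqP; rewrite eqEcard subsetT cardsT cardU leqnn.
by rewrite UT in lamU; apply: realizes_setT_in_P lamU.
Qed.
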